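(* Let $X$ be a finitely stable rack acting on a set $M$. Then for any stabilizing family $(u_1,\ldots,u_s)$ of $X$, we have $(m\cdot x)\cdot(u_i)_i=(m\cdot(u_i)_i)\cdot x$ for all $m\in M$ and $x\in X$.
   Context: A rack is a set $X$ with a binary operation $\rhd$ such that each $x\mapsto x\rhd y$ is bijective and $(x\rhd y)\rhd z=(x\rhd z)\rhd(y\rhd z)$. A stabilizing family of $X$ is a finite family $(u_1,\ldots,u_s)$ with $(\cdots(x\rhd u_1)\cdots)\rhd u_s=x$ for all $x$; $X$ is finitely stable if it has one. A rack action of $X$ on a set $M$ is a map $M\times X\to M$, $(m,x)\mapsto m\cdot x$, such that each $m\mapsto m\cdot x$ is a bijection, $(m\cdot x)\cdot y=(m\cdot y)\cdot(x\rhd y)$ for all $m,x,y$, and for every stabilizing family $(u_1,\ldots,u_s)$ and every cyclic shift $\sigma$ of $\{1,\ldots,s\}$, $m\cdot(u_i)_i=m\cdot(u_{\sigma(i)})_i$. Here $m\cdot(x_i)_i:=(\cdots(m\cdot x_1)\cdots)\cdot x_s$. *)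

From Stdlib Require Import List.
Import ListNotations.

Definition bijective {A : Type} (f : A -> A) : Prop :=
  exists g : A -> A, (forall a, g (f a) = a) /\ (forall a, f (g a) = a).

(* Rack axioms for op x y = x ▷ y. *)
Definition is_rack {X : Type} (op : X -> X -> X) : Prop :=
  (forall y, bijective (fun x => op x y)) /\
  (forall x y z, op (op x y) z = op (op x z) (op y z)).

Definition rack_iter {X : Type} (op : X -> X -> X) (x : X) (us : list X) : X :=
  fold_left op us x.

Definition stabilizing {X : Type} (op : X -> X -> X) (us : list X) : Prop :=
  forall x, rack_iter op x us = x.

Definition finitely_stable {X : Type} (op : X -> X -> X) : Prop :=
  exists us, stabilizing op us.

Definition act_iter {M X : Type} (act : M -> X -> M) (m : M) (xs : list X) : M :=
  fold_left act xs m.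

Definition rot {X : Type} (k : nat) (us : list X) : list X :=
  skipn k us ++ firstn k us.

Definition is_rack_action {M X : Type} (op : X -> X -> X) (act : M -> X -> M) : Prop :=
  (forall x, bijective (fun m => act m x)) /\
  (forall m x y, act (act m x) y = act (act m y) (op x y)) /\
  (forall us, stabilizing op us ->
     forall k, k < length us -> forall m, act_iter act m us = act_iter act m (rot k us)).

From Stdlib Require Import List.

Section ActIter.

Variables (X M : Type) (op : X -> X -> X) (act : M -> X -> M).
Hypothesis act_op : forall m x y, act (act m x) y = act (act m y) (op x y).

Lemma act_iter_act (us : list X) (m : M) (x : X) :
  act_iter act (act m x) us = act (act_iter act m us) (rack_iter op x us).
Proof.
  unfold act_iter, rack_iter.
  revert m x; induction us as [|u us IH]; intros m x; simpl.
  - reflexivity.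
  - rewrite act_op. apply IH.
Qed.

End ActIter.

Theorem mainTheorem17 (X M : Type) (op : X -> X -> X) (act : M -> X -> M)
  (HX : is_rack op) (Hfs : finitely_stable op) (Hact : is_rack_action op act)
  (us : list X) (Hus : stabilizing op us) :
  forall (m : M) (x : X), act_iter act (act m x) us = act (act_iter act m us) x.
Proof.
  intros m x.
  destruct Hact as [_ [act_op _]].
  rewrite (act_iter_act X M op act act_op), (Hus x).
  reflexivity.
Qed.
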